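(* Let $h_1,h_2,h$ be flow graphs over a flow monoid $\mathbb{M}$ with $h_1\approx h_2$. Then $h_1\# h$ if and only if $h_2\# h$, and in case of definedness, $h_1*h\approx h_2*h$.
   Context: A flow monoid is a commutative monoid $(\mathbb{M},+,0)$ such that $n\le m :\iff \exists o.\ m=n+o$ is a partial order in which every ascending chain $K$ has a least upper bound $\bigsqcup K$, and $n+\bigsqcup K=\bigsqcup(n+K)$. $\mathcal{C}(\mathbb{M}\to\mathbb{M})$ is the set of functions commuting with least upper bounds of ascending chains. Infinite sums denote least upper bounds of finite partial sums. A flow graph is $h=(X,E,\mathit{in})$ with $X\subseteq\mathbb{N}$ finite, $E:X\times\mathbb{N}\to\mathcal{C}(\mathbb{M}\to\mathbb{M})$, $\mathit{in}:(\mathbb{N}\setminus X)\times X\to\mathbb{M}$; $\mathit{in}_x=\sum_{y\in\mathbb{N}\setminus X}\mathit{in}(y,x)$; the flow $h.\mathit{flow}$ is the least $\mathit{flow}:X\to\mathbb{M}$ with $\mathit{flow}(x)=\mathit{in}_x+\sum_{y\in X}E(y,x)(\mathit{flow}(y))$; the outflow is $h.\mathit{out}(x,y)=E(x,y)(h.\mathit{flow}(x))$ for $x\in X$, $y\notin X$. Composition: $h_1\#\#h_2$ iff $X_1\cap X_2=\emptyset$ and for all $x\in X_1,y\in X_2$, $h_1.\mathit{out}(x,y)=h_2.\mathit{in}(x,y)$ and $h_2.\mathit{out}(y,x)=h_1.\mathit{in}(y,x)$; $h_1\uplus h_2=(X_1\uplus X_2,E_1\uplus E_2,(\mathit{in}_1\uplus\mathit{in}_2)|_{(\mathbb{N}\setminus(X_1\uplus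 X_2))\times(X_1\uplus X_2)})$; $h_1\# h_2$ iff $h_1\#\#h_2$ and $h_1.\mathit{flow}\uplus h_2.\mathit{flow}=(h_1\uplus h_2).\mathit{flow}$, and then $h_1*h_2=h_1\uplus h_2$. Transfer function: for $h=(X,E,\mathit{in})$ and any inflow $\mathit{in}':(\mathbb{N}\setminus X)\times X\to\mathbb{M}$, $\mathsf{tf}(h)(\mathit{in}')$ is the outflow of the flow graph $(X,E,\mathit{in}')$. For an inflow $\mathit{in}$, $\mathsf{tf}(h_1)=_{\mathit{in}}\mathsf{tf}(h_2)$ means $\mathsf{tf}(h_1)(\mathit{in}')=\mathsf{tf}(h_2)(\mathit{in}')$ for all $\mathit{in}'\le\mathit{in}$ (pointwise). Contextual equivalence $h_1\approx h_2$ means $h_1.X=h_2.X$, $h_1.\mathit{in}=h_2.\mathit{in}$ and $\mathsf{tf}(h_1)=_{h_1.\mathit{in}}\mathsf{tf}(h_2)$. *)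

From HB Require Import structures.
From mathcomp Require Import all_boot.
From mathcomp Require Import finmap.
From Stdlib Require Import ClassicalEpsilon.

Set Implicit Arguments.
Unset Strict Implicit.
Unset Printing Implicit Defensive.

Local Open Scope fset_scope.

Definition mle (T : Type) (add : T -> T -> T) (n m : T) : Prop :=
  exists o, m = add n o.

Definition ascending (T : Type) (add : T -> T -> T) (K : nat -> T) : Prop :=
  forall i, mle add (K i) (K i.+1).

Definition is_lub (T : Type) (add : T -> T -> T) (K : nat -> T) (l : T) : Prop :=
  (forall i, mle add (K i) l) /\
  (forall u, (forall i, mle add (K i) u) -> mle add l u).

Record flow_monoid := FlowMonoid {
  fm_car :> Type;
  fm_add : fm_car -> fm_car -> fm_car;
  fm_zero : fm_car;
  fm_addA : forall a b c, fm_add a (fm_add b c) = fm_add (fm_add a b) c;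
  fm_addC : forall a b, fm_add a b = fm_add b a;
  fm_add0 : forall a, fm_add fm_zero a = a;
  (* <= is a partial order (reflexivity/transitivity are automatic) *)
  fm_antisym : forall a b, mle fm_add a b -> mle fm_add b a -> a = b;
  fm_lub_ex : forall K, ascending fm_add K -> exists l, is_lub fm_add K l;
  fm_add_lub : forall n K l, ascending fm_add K -> is_lub fm_add K l ->
      is_lub fm_add (fun i => fm_add n (K i)) (fm_add n l)
}.

Section FlowDefs.
Variable M : flow_monoid.

Local Notation "a + b" := (fm_add a b).
Local Notation "0" := (fm_zero M).
Local Notation "a <= b" := (mle (@fm_add M) a b).

Definition sup (K : nat -> M) : M :=
  epsilon (inhabits 0) (is_lub (@fm_add M) K).

Definition continuous (f : M -> M) : Prop :=
  forall K l, ascending (@fm_add M) K -> is_lub (@fm_add M) K l ->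
    is_lub (@fm_add M) (fun i => f (K i)) (f l).

Definition msum (s : seq nat) (F : nat -> M) : M :=
  \big[@fm_add M/0]_(y <- s) F y.

(* E and in are represented by
   total functions; only their values on the domains X x N, resp.
   (N \ X) x X, are ever used (all notions below only look at those). *)

Record flow_graph := FlowGraph {
  fg_X : {fset nat};
  fg_E : nat -> nat -> M -> M;
  fg_in : nat -> nat -> M;
  fg_E_cont : forall x y, x \in fg_X -> continuous (fg_E x y)
}.

(* in_x = sum_{y in N \ X} in(y,x), the lub of the finite partial sums *)
Definition inflow (h : flow_graph) (x : nat) : M :=
  sup (fun n => \big[@fm_add M/0]_(0 <= y < n | y \notin fg_X h) fg_in h y x).

Definition is_flow (h : flow_graph) (f : nat -> M) : Prop :=
  forall x, x \in fg_X h ->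
    f x = inflow h x + msum (fg_X h) (fun y => fg_E h y x (f y)).

Definition is_least_flow (h : flow_graph) (f : nat -> M) : Prop :=
  is_flow h f /\
  forall g, is_flow h g -> forall x, x \in fg_X h -> f x <= g x.

(* h.flow : the least flow (its values outside X are irrelevant) *)
Definition flow (h : flow_graph) : nat -> M :=
  epsilon (inhabits (fun _ => 0)) (is_least_flow h).

Definition out (h : flow_graph) (x y : nat) : M := fg_E h x y (flow h x).

Definition comp_pre (h1 h2 : flow_graph) : Prop :=
  [disjoint fg_X h1 & fg_X h2] /\
  (forall x y, x \in fg_X h1 -> y \in fg_X h2 -> out h1 x y = fg_in h2 x y) /\
  (forall x y, x \in fg_X h1 -> y \in fg_X h2 -> out h2 y x = fg_in h1 y x).

Lemma union_E_cont (h1 h2 : flow_graph) :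
  forall x y, x \in fg_X h1 `|` fg_X h2 ->
    continuous (if x \in fg_X h1 then fg_E h1 x y else fg_E h2 x y).
Proof.
move=> x y; rewrite in_fsetU; case: ifP => [Hx _|_ /= Hx].
  exact: fg_E_cont.
exact: fg_E_cont.
Qed.

(* h1 (+) h2 = (X1 (+) X2, E1 (+) E2, (in1 (+) in2) restricted); used only
   when X1, X2 are disjoint.  The restriction of the inflow to
   (N \ (X1 u X2)) x (X1 u X2) is implicit in the junk-value convention. *)
Definition union (h1 h2 : flow_graph) : flow_graph :=
  @FlowGraph (fg_X h1 `|` fg_X h2)
    (fun x y => if x \in fg_X h1 then fg_E h1 x y else fg_E h2 x y)
    (fun y x => if x \in fg_X h1 then fg_in h1 y x else fg_in h2 y x)
    (@union_E_cont h1 h2).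

Definition comp_def (h1 h2 : flow_graph) : Prop :=
  comp_pre h1 h2 /\
  forall x, x \in fg_X h1 `|` fg_X h2 ->
    flow (union h1 h2) x = (if x \in fg_X h1 then flow h1 x else flow h2 x).

Definition fg_comp (h1 h2 : flow_graph) : flow_graph := union h1 h2.

Definition with_inflow (h : flow_graph) (in' : nat -> nat -> M) : flow_graph :=
  @FlowGraph (fg_X h) (fg_E h) in' (@fg_E_cont h).

Definition tf (h : flow_graph) (in' : nat -> nat -> M) : nat -> nat -> M :=
  out (with_inflow h in').

Definition tf_eq_below (inf : nat -> nat -> M) (h1 h2 : flow_graph) : Prop :=
  forall in' : nat -> nat -> M,
    (forall y x, y \notin fg_X h1 -> x \in fg_X h1 -> in' y x <= inf y x) ->
    forall x y, x \in fg_X h1 -> y \notin fg_X h1 -> tf h1 in' x y = tf h2 in' x y.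

Definition ctx_equiv (h1 h2 : flow_graph) : Prop :=
  fg_X h1 = fg_X h2 /\
  (forall y x, y \notin fg_X h1 -> x \in fg_X h1 -> fg_in h1 y x = fg_in h2 y x) /\
  tf_eq_below (fg_in h1) h1 h2.

End FlowDefs.

(* Proof outline, one section per step.
   1. (FlowMonoidOrder, LeastUpperBounds, InflowSums) The order of a flow
      monoid is preserved by addition, finite sums and continuous functions;
      lubs of ascending chains commute with finite sums; summed inflows split
      along a disjoint union of node sets.
   2. (KleeneFlow) Kleene's theorem: the flow of h is the lub of the iterates
      of the flow equation from 0, hence a fixed point below every prefixed
      point; it is monotone in the inflow and only depends on the inflow
      from outside of X.
   3. (Decomposition) Inside the union of disjoint graphs ha and h fed with
      an inflow i, the flow on ha is the flow of ha alone, fed with i plus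
      what h sends into ha (the "context inflow").
   4. (ContextualEquivalence) If h1 ~ h2 and the context inflow of h1 stays
      below h1.in, replacing h1 by h2 in the union changes neither the flow
      on h (each flow yields a prefixed point for the other union, by
      equality of transfer functions) nor the outflow of the union.  For
      h1 # h this bound holds for every inflow below that of h1 * h.
   5. (Congruence) Hence h1 # h implies h2 # h and h1 * h ~ h2 * h; the main
      theorem adds the symmetry of ~. *)

From HB Require Import structures.
From mathcomp Require Import all_boot.
From mathcomp Require Import finmap.
From Stdlib Require Import ClassicalEpsilon FunctionalExtensionality.

Set Implicit Arguments.
Unset Strict Implicit.
Unset Printing Implicit Defensive.
Local Open Scope fset_scope.

Section FlowMonoidOrder.
Variable M : flow_monoid.

HB.instance Definition _ := Monoid.isComLaw.Build (fm_car M) (fm_zero M)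
  (@fm_add M) (@fm_addA M) (@fm_addC M) (@fm_add0 M).

Local Notation "a +m b" := (@fm_add M a b) (at level 50, left associativity).
Local Notation "a <=m b" := (mle (@fm_add M) a b) (at level 70).
Local Notation z := (fm_zero M).

Lemma addm0 (a : M) : a +m z = a.
Proof. by rewrite fm_addC fm_add0. Qed.

Lemma mle_refl (a : M) : a <=m a.
Proof. by exists z; rewrite addm0. Qed.

Lemma mle_trans (a b c : M) : a <=m b -> b <=m c -> a <=m c.
Proof. by move=> [o ->] [p ->]; exists (o +m p); rewrite fm_addA. Qed.

Lemma mle0 (a : M) : z <=m a.
Proof. by exists a; rewrite fm_add0. Qed.

Lemma mleD2l (a b c : M) : a <=m b -> c +m a <=m c +m b.
Proof. by move=> [o ->]; exists o; rewrite fm_addA. Qed.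

Lemma mleD (a b c d : M) : a <=m b -> c <=m d -> a +m c <=m b +m d.
Proof.
move=> lab lcd; apply: (mle_trans (mleD2l a lcd)).
by rewrite (fm_addC a) (fm_addC b); apply: mleD2l.
Qed.

Lemma mle_msum (s : seq nat) (F G : nat -> M) :
  (forall y, y \in s -> F y <=m G y) -> msum s F <=m msum s G.
Proof.
move=> leFG; rewrite /msum !big_seq.
apply: (big_ind2 (fun a b => a <=m b)) => //; first exact: mle_refl.
by move=> ? ? ? ? ? ?; apply: mleD.
Qed.

(* Continuous functions are monotone: apply continuity to the chain a, b, b, ... *)
Lemma continuous_mono (f : M -> M) :
  continuous f -> forall a b, a <=m b -> f a <=m f b.
Proof.
move=> cf a b lab; pose K (i : nat) := if i is 0 then a else b.
have K_asc : ascending (@fm_add M) K by case=> [|i] /=; [exact: lab|exact: mle_refl].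
have K_lub : is_lub (@fm_add M) K b.
  split=> [[|i]|u Ku]; [exact: lab|exact: mle_refl|exact: (Ku 1)].
exact: (cf K b K_asc K_lub).1 0.
Qed.

End FlowMonoidOrder.

Section LeastUpperBounds.
Variable M : flow_monoid.

Local Notation "a +m b" := (@fm_add M a b) (at level 50, left associativity).
Local Notation "a <=m b" := (mle (@fm_add M) a b) (at level 70).
Local Notation asc := (ascending (@fm_add M)).
Local Notation lub := (is_lub (@fm_add M)).

Lemma lub_unique (K : nat -> M) l l' : lub K l -> lub K l' -> l = l'.
Proof. by move=> [ubl leastl] [ubl' leastl']; apply: fm_antisym; auto. Qed.

Lemma chain_mono (K : nat -> M) : asc K -> forall i j, (i <= j)%N -> K i <=m K j.
Proof.
move=> Kasc i j /subnK <-; elim: (j - i)%N => [|n IH]; first exact: mle_refl.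
by apply: mle_trans IH _; rewrite addSn; apply: Kasc.
Qed.

Lemma sup_lub (K : nat -> M) : asc K -> lub K (sup K).
Proof. by move=> Kasc; apply: epsilon_spec; apply: fm_lub_ex. Qed.

Lemma lub_shift (K : nat -> M) l N : asc K -> lub K l -> lub (fun n => K (n + N)%N) l.
Proof.
move=> Kasc [ubl leastl]; split=> [i|u ubu]; first exact: ubl.
by apply: leastl => i; apply: mle_trans (ubu i); apply: chain_mono; rewrite ?leq_addr.
Qed.

Lemma lub_mono (K K' : nat -> M) l l' :
  lub K l -> lub K' l' -> (forall i, K i <=m K' i) -> l <=m l'.
Proof. by move=> [_ leastl] [ubl' _] leK; apply: leastl => i; apply: mle_trans (ubl' i). Qed.

(* Lubs commute with binary sums: a consequence of n + sup K = sup (n + K)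
   applied in each argument separately. *)
Lemma lub_add (A B : nat -> M) a b : asc A -> asc B -> lub A a -> lub B b ->
  lub (fun n => A n +m B n) (a +m b).
Proof.
move=> Aasc Basc Alub Blub; split=> [i|u ubu].
  by apply: mleD; [exact: Alub.1|exact: Blub.1].
have leAb i : A i +m b <=m u.
  apply: (fm_add_lub (A i) Basc Blub).2 => j; apply: mle_trans (ubu (maxn i j)).
  by apply: mleD; apply: chain_mono; rewrite ?leq_maxl ?leq_maxr.
rewrite fm_addC; apply: (fm_add_lub b Aasc Alub).2 => i; rewrite fm_addC; exact: leAb.
Qed.

Lemma lub_msum (s : seq nat) (F : nat -> nat -> M) (l : nat -> M) :
  (forall y, y \in s -> asc (fun n => F n y)) ->
  (forall y, y \in s -> lub (fun n => F n y) (l y)) ->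
  asc (fun n => msum s (F n)) /\ lub (fun n => msum s (F n)) (msum s l).
Proof.
rewrite /msum; elim: s => [|y s IH] Fasc Flub.
  have -> : (fun n => \big[@fm_add M/fm_zero M]_(x <- [::]) F n x) = fun=> fm_zero M.
    by apply: functional_extensionality => n; rewrite big_nil.
  rewrite big_nil; split=> [i|]; first exact: mle_refl.
  by split=> [i|u ubu]; [exact: mle_refl|exact: ubu 0].
have sub_s : {subset s <= y :: s} by move=> x xs; rewrite inE xs orbT.
have [sasc slub] := IH (fun x xs => Fasc x (sub_s x xs)) (fun x xs => Flub x (sub_s x xs)).
have yasc := Fasc y (mem_head y s).
have -> : (fun n => \big[@fm_add M/fm_zero M]_(x <- y :: s) F n x) =
    fun n => F n y +m \big[@fm_add M/fm_zero M]_(x <- s) F n x.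
  by apply: functional_extensionality => n; rewrite big_cons.
rewrite big_cons.
by split; [move=> i; apply: mleD|apply: lub_add => //; apply: Flub; exact: mem_head].
Qed.

End LeastUpperBounds.

Section InflowSums.
Variable M : flow_monoid.

Local Notation "a +m b" := (@fm_add M a b) (at level 50, left associativity).
Local Notation "a <=m b" := (mle (@fm_add M) a b) (at level 70).
Local Notation z := (fm_zero M).
Implicit Types h : flow_graph M.

Lemma partial_sum_asc (P : pred nat) (g : nat -> M) :
  ascending (@fm_add M) (fun n => \big[@fm_add M/z]_(0 <= y < n | P y) g y).
Proof.
move=> n; rewrite (big_mkcond P) (big_mkcond P) big_nat_recr //=.
by exists (if P n then g n else z).
Qed.

Lemma inflow_mono h h' x : fg_X h = fg_X h' ->
  (forall y, y \notin fg_X h -> fg_in h y x <=m fg_in h' y x) -> inflow h x <=m inflow h' x.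
Proof.
move=> eqX lein; rewrite /inflow -eqX.
apply: lub_mono (sup_lub (partial_sum_asc _ _)) (sup_lub (partial_sum_asc _ _)) _ => n.
apply: (big_ind2 (fun a b => a <=m b)); [exact: mle_refl| |exact: lein].
by move=> ? ? ? ? ? ?; apply: mleD.
Qed.

Lemma partial_sum_fset (A : {fset nat}) (c : nat -> M) n :
  (forall y, y \in A -> (y < n)%N) ->
  \big[@fm_add M/z]_(0 <= y < n | y \in A) c y = msum A c.
Proof.
move=> ltAn; rewrite /msum -big_filter; apply: perm_big.
apply: uniq_perm; [exact/filter_uniq/iota_uniq|exact: fset_uniq|] => y.
by rewrite mem_filter mem_index_iota /=; case yA: (y \in A); rewrite //= ltAn.
Qed.

Lemma msum_fsetU (A B : {fset nat}) (c : nat -> M) :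
  [disjoint A & B] -> msum (A `|` B) c = msum A c +m msum B c.
Proof.
move=> /fdisjointP disjAB; rewrite /msum -big_cat; apply: perm_big.
apply: uniq_perm; first exact: fset_uniq.
  rewrite cat_uniq !fset_uniq /= andbT; apply/hasPn => y yB /=.
  by apply/negP => yA; have := disjAB y yA; rewrite yB.
by move=> y; rewrite mem_cat in_fsetU.
Qed.

Lemma inflow_split (A B : {fset nat}) (i c : nat -> M) : [disjoint A & B] ->
  sup (fun n => \big[@fm_add M/z]_(0 <= y < n | y \notin A) (if y \in B then c y else i y))
  = sup (fun n => \big[@fm_add M/z]_(0 <= y < n | y \notin A `|` B) i y) +m msum B c.
Proof.
move=> /fdisjointP disjAB; set P := fun n => _; set Q := fun n => _.
have splitP n : P n = Q n +m \big[@fm_add M/z]_(0 <= y < n | y \in B) c y.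
  rewrite /P /Q (bigID (fun y => y \in B)) /= fm_addC; congr (_ +m _).
    apply: eq_big => [y|y /andP [_ /negbTE ->] //]; by rewrite in_fsetU negb_or.
  apply: eq_big => [y|y /andP [_ ->] //]; case yB : (y \in B); rewrite ?andbF //.
  by rewrite andbT; apply/negP => yA; have := disjAB y yA; rewrite yB.
set N := (\max_(y <- B) y).+1.
have Pasc : ascending (@fm_add M) P by apply: partial_sum_asc.
have Qasc : ascending (@fm_add M) Q by apply: partial_sum_asc.
have Qlub := fm_add_lub (msum B c) (fun n => Qasc (n + N)%N) (lub_shift N Qasc (sup_lub Qasc)).
apply: lub_unique (lub_shift N Pasc (sup_lub Pasc)) _; rewrite fm_addC.
have -> : (fun n => P (n + N)%N) = fun n => msum B c +m Q (n + N)%N.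
  apply: functional_extensionality => n.
  rewrite splitP partial_sum_fset; first by rewrite fm_addC.
  move=> y yB; apply: (leq_trans _ (leq_addl n N)).
  by rewrite /N ltnS (bigmaxn_sup_seq y).
exact: Qlub.
Qed.

End InflowSums.

Section KleeneFlow.
Variable M : flow_monoid.

Local Notation "a +m b" := (@fm_add M a b) (at level 50, left associativity).
Local Notation "a <=m b" := (mle (@fm_add M) a b) (at level 70).
Local Notation z := (fm_zero M).
Implicit Types h : flow_graph M.

Definition flow_step h (g : nat -> M) (x : nat) : M :=
  inflow h x +m msum (fg_X h) (fun y => fg_E h y x (g y)).

Definition prefixed h (g : nat -> M) : Prop :=
  forall x, x \in fg_X h -> flow_step h g x <=m g x.

Lemma flow_step_mono h (g g' : nat -> M) :
  (forall y, y \in fg_X h -> g y <=m g' y) -> forall x, flow_step h g x <=m flow_step h g' x.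
Proof.
move=> legg' x; apply: mleD2l; apply: mle_msum => y yX.
by apply: continuous_mono; [apply: fg_E_cont|apply: legg'].
Qed.

Definition kleene h (n : nat) : nat -> M := iter n (flow_step h) (fun _ => z).

Definition kleene_lim h (x : nat) : M := sup (fun n => kleene h n x).

Lemma kleene_asc h x : ascending (@fm_add M) (fun n => kleene h n x).
Proof.
move=> n; elim: n x => [|n IH] x; first exact: mle0.
by apply: flow_step_mono => y _; apply: IH.
Qed.

Lemma kleene_lim_lub h x : is_lub (@fm_add M) (fun n => kleene h n x) (kleene_lim h x).
Proof. exact: sup_lub (kleene_asc h x). Qed.

(* By continuity of the edge functions the Kleene limit solves the flow equation. *)
Lemma kleene_lim_fix h x : kleene_lim h x = flow_step h (kleene_lim h) x.
Proof.
have [sum_asc sum_lub] := @lub_msum M (fg_X h) (fun n y => fg_E h y x (kleene h n y))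
   (fun y => fg_E h y x (kleene_lim h y))
   (fun y yX n => continuous_mono (fg_E_cont x yX) (kleene_asc h y n))
   (fun y yX => fg_E_cont x yX (kleene_asc h y) (kleene_lim_lub h y)).
have step_lub := fm_add_lub (inflow h x) sum_asc sum_lub.
apply: lub_unique (lub_shift 1 (kleene_asc h x) (kleene_lim_lub h x)) _.
have -> : (fun n => kleene h (n + 1) x) = fun n => flow_step h (kleene h n) x.
  by apply: functional_extensionality => n; rewrite addn1.
exact: step_lub.
Qed.

Lemma kleene_lim_least h g : prefixed h g -> forall x, x \in fg_X h -> kleene_lim h x <=m g x.
Proof.
move=> gpre x xX; apply: (kleene_lim_lub h x).2 => n.
elim: n x xX => [|n IH] x xX; first exact: mle0.
by apply: mle_trans (gpre x xX); apply: flow_step_mono.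
Qed.

Lemma flow_least h : is_least_flow h (flow h).
Proof.
apply: epsilon_spec; exists (kleene_lim h); split=> [x _|g gflow]; first exact: kleene_lim_fix.
by apply: kleene_lim_least => x xX; rewrite /flow_step -gflow //; exact: mle_refl.
Qed.

Lemma flow_fix h x : x \in fg_X h -> flow h x = flow_step h (flow h) x.
Proof. exact: (flow_least h).1. Qed.

Lemma flow_below_prefixed h g : prefixed h g -> forall x, x \in fg_X h -> flow h x <=m g x.
Proof.
move=> gpre x xX; apply: mle_trans (kleene_lim_least gpre xX).
by apply: (flow_least h).2 xX => y _; exact: kleene_lim_fix.
Qed.

Lemma with_own_inflow h : with_inflow h (fg_in h) = h.
Proof. by case: h. Qed.

Lemma flow_inflow_mono h (i i' : nat -> nat -> M) :
  (forall y x, y \notin fg_X h -> x \in fg_X h -> i y x <=m i' y x) ->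
  forall x, x \in fg_X h -> flow (with_inflow h i) x <=m flow (with_inflow h i') x.
Proof.
move=> leii'; apply: (@flow_below_prefixed (with_inflow h i)) => x xX.
rewrite [X in _ <=m X](@flow_fix (with_inflow h i')) //.
by apply: mleD; [apply: inflow_mono => // y yX; apply: leii'|exact: mle_refl].
Qed.

Lemma flow_inflow_ext h (i : nat -> nat -> M) :
  (forall y x, y \notin fg_X h -> x \in fg_X h -> i y x = fg_in h y x) ->
  forall x, x \in fg_X h -> flow (with_inflow h i) x = flow h x.
Proof.
move=> eqi x xX; rewrite -[in RHS](with_own_inflow h).
by apply: fm_antisym; apply: flow_inflow_mono => // y x' yX x'X; rewrite eqi //; exact: mle_refl.
Qed.

End KleeneFlow.

Section Decomposition.
Variable M : flow_monoid.

Local Notation "a +m b" := (@fm_add M a b) (at level 50, left associativity).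
Local Notation "a <=m b" := (mle (@fm_add M) a b) (at level 70).
Implicit Types h : flow_graph M.

Definition glue (ha h : flow_graph M) (i : nat -> nat -> M) : flow_graph M :=
  with_inflow (union ha h) i.

(* The inflow seen by a component when its context h carries the flow f and
   the external inflow is i. *)
Definition ctx_inflow h (i : nat -> nat -> M) (f : nat -> M) : nat -> nat -> M :=
  fun y x => if y \in fg_X h then fg_E h y x (f y) else i y x.

Definition restrict (ha h : flow_graph M) i f : flow_graph M :=
  with_inflow ha (ctx_inflow h i f).

Definition esum h (g : nat -> M) (x : nat) : M :=
  msum (fg_X h) (fun y => fg_E h y x (g y)).

Lemma esum_ext h g g' x : (forall y, y \in fg_X h -> g y = g' y) -> esum h g x = esum h g' x.
Proof. by move=> eqgg'; apply: eq_big_seq => y yX; rewrite eqgg'. Qed.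

Variables (ha h : flow_graph M) (i : nat -> nat -> M).
Hypothesis disj : [disjoint fg_X ha & fg_X h].

Definition splice (f : nat -> M) (y : nat) : M :=
  if y \in fg_X ha then flow (restrict ha h i f) y else f y.

Lemma flow_step_glue g x :
  flow_step (glue ha h i) g x = inflow (glue ha h i) x +m (esum ha g x +m esum h g x).
Proof.
have /fdisjointP disj' := disj.
rewrite /flow_step /= msum_fsetU //; congr (_ +m (_ +m _)).
  by apply: eq_big_seq => y /= ->.
apply: eq_big_seq => y yh /=; case: ifP => // yha.
by have := disj' y yha; rewrite yh.
Qed.

Lemma flow_step_restrict f g x :
  flow_step (restrict ha h i f) g x = (inflow (glue ha h i) x +m esum h f x) +m esum ha g x.
Proof.
by rewrite /flow_step /inflow /= (inflow_split (fun y => i y x) (fun y => fg_E h y x (f y)) disj).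
Qed.

Lemma splice_ctx f y : y \notin fg_X ha -> splice f y = f y.
Proof. by rewrite /splice => /negbTE ->. Qed.

(* On ha, the flow equation of the union at [splice f] is the flow equation
   of the cut-out component, which its flow solves. *)
Lemma flow_step_splice f x :
  x \in fg_X ha -> flow_step (glue ha h i) (splice f) x = flow (restrict ha h i f) x.
Proof.
have /fdisjointP disj' := disj.
move=> xa; rewrite flow_step_glue (@flow_fix _ (restrict ha h i f)) // flow_step_restrict.
rewrite (@esum_ext ha _ (flow (restrict ha h i f))); last by move=> y ya; rewrite /splice ya.
rewrite (@esum_ext h _ f); last by move=> y yh; apply: splice_ctx; apply/negP => /disj'; rewrite yh.
by rewrite (fm_addC (esum ha _ x)) fm_addA.
Qed.

Lemma flow_glue_le_splice f :
  (forall x, x \in fg_X h -> flow_step (glue ha h i) (splice f) x <=m f x) ->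
  forall x, x \in fg_X ha `|` fg_X h -> flow (glue ha h i) x <=m splice f x.
Proof.
have /fdisjointP disj' := disj.
move=> leh; apply: (@flow_below_prefixed M (glue ha h i)) => x.
rewrite /= in_fsetU => /orP [xa|xh].
  by rewrite flow_step_splice // /splice xa; exact: mle_refl.
by rewrite splice_ctx; [exact: leh|apply/negP => /disj'; rewrite xh].
Qed.

Lemma flow_glue_restrict x : x \in fg_X ha ->
  flow (glue ha h i) x = flow (restrict ha h i (flow (glue ha h i))) x.
Proof.
set f := flow (glue ha h i) => xa.
have inU y : y \in fg_X ha `|` fg_X h -> f y = flow_step (glue ha h i) f y.
  exact: (@flow_fix M (glue ha h i)).
have le_restr : forall y, y \in fg_X ha -> flow (restrict ha h i f) y <=m f y.
  apply: (@flow_below_prefixed M (restrict ha h i f)) => y ya.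
  rewrite flow_step_restrict -fm_addA (fm_addC (esum h f y)) -flow_step_glue -inU.
    exact: mle_refl.
  by rewrite in_fsetU ya.
have le_splice y : y \in fg_X ha `|` fg_X h -> splice f y <=m f y.
  by rewrite /splice; case: ifP => [ya _|_ _]; [exact: le_restr|exact: mle_refl].
have step_le y : y \in fg_X h -> flow_step (glue ha h i) (splice f) y <=m f y.
  move=> yh; rewrite [X in _ <=m X]inU ?in_fsetU ?yh ?orbT //.
  by apply: flow_step_mono => y'; apply: le_splice.
apply: fm_antisym; last exact: le_restr.
by have := flow_glue_le_splice step_le (x := x); rewrite /splice xa in_fsetU xa; apply.
Qed.

End Decomposition.

Section ContextualEquivalence.
Variable M : flow_monoid.

Local Notation "a <=m b" := (mle (@fm_add M) a b) (at level 70).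
Implicit Types h : flow_graph M.

Lemma ctx_equiv_sym h1 h2 : ctx_equiv h1 h2 -> ctx_equiv h2 h1.
Proof.
move=> [eqX [eqin eqtf]]; split; first by rewrite eqX.
split=> [y x|i' lei' x y]; rewrite -eqX.
  by move=> yX xX; rewrite eqin.
move=> xX yX; symmetry; apply: eqtf => // y' x' y'X x'X.
by rewrite eqin //; apply: lei'; rewrite -eqX.
Qed.

Lemma out_equiv h1 h2 x y : ctx_equiv h1 h2 ->
  x \in fg_X h1 -> y \notin fg_X h1 -> out h1 x y = out h2 x y.
Proof.
move=> [eqX [eqin eqtf]] xX yX.
have := eqtf (fg_in h1) (fun y x _ _ => mle_refl _) x y xX yX.
rewrite /tf /out /= with_own_inflow => ->; congr (fg_E h2 x y _).
by apply: flow_inflow_ext; rewrite -?eqX // => y' x' y'X x'X; rewrite eqin // eqX.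
Qed.

(* Inside [glue h1 h i], the inflow that h1 receives is below h1.in: this is
   the range of inflows on which h1 and an equivalent h2 have the same
   transfer function. *)
Definition ctx_bounded (h1 h : flow_graph M) (i : nat -> nat -> M) : Prop :=
  forall y x, y \notin fg_X h1 -> x \in fg_X h1 ->
    ctx_inflow h i (flow (glue h1 h i)) y x <=m fg_in h1 y x.

Lemma inflow_glue_equiv h1 h2 h i x : fg_X h1 = fg_X h2 ->
  inflow (glue h2 h i) x = inflow (glue h1 h i) x.
Proof. by move=> eqX; rewrite /inflow /= eqX. Qed.

Lemma tf_restrict h1 h2 h i : ctx_equiv h1 h2 -> [disjoint fg_X h1 & fg_X h] ->
  ctx_bounded h1 h i -> forall y x, y \in fg_X h1 -> x \notin fg_X h1 ->
  fg_E h2 y x (flow (restrict h2 h i (flow (glue h1 h i))) y) = fg_E h1 y x (flow (glue h1 h i) y).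
Proof.
move=> [_ [_ eqtf]] disj bnd y x yX xX.
by rewrite (flow_glue_restrict i disj yX); have := eqtf _ bnd y x yX xX; rewrite /tf /out /=.
Qed.

(* Replacing h1 by h2 can only decrease the flow on the context h: splicing
   the cut-out flow of h2 into the flow of [glue h1 h i] gives a prefixed
   point of [glue h2 h i]. *)
Lemma flow_glue_equiv_le h1 h2 h i : ctx_equiv h1 h2 -> [disjoint fg_X h1 & fg_X h] ->
  ctx_bounded h1 h i -> forall x, x \in fg_X h -> flow (glue h2 h i) x <=m flow (glue h1 h i) x.
Proof.
move=> eq12 disj bnd; have [eqX _] := eq12.
have disj2 : [disjoint fg_X h2 & fg_X h] by rewrite -eqX.
have /fdisjointP disj' := disj.
set f := flow (glue h1 h i).
have esum_eq x : x \in fg_X h -> esum h2 (splice h2 h i f) x = esum h1 f x.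
  move=> xh; rewrite /esum -eqX; apply: eq_big_seq => y y1.
  rewrite /splice -eqX y1; apply: tf_restrict => //.
  by apply/negP => /disj'; rewrite xh.
move=> x xh; have := @flow_glue_le_splice M h2 h i disj2 f _ x.
rewrite splice_ctx; last by rewrite -eqX; apply/negP => /disj'; rewrite xh.
apply; last by rewrite in_fsetU xh orbT.
move=> y yh; rewrite flow_step_glue // esum_eq // (inflow_glue_equiv _ _ _ eqX).
rewrite (@esum_ext M h _ f); last first.
  by move=> y' y'h; rewrite splice_ctx // -eqX; apply/negP => /disj'; rewrite y'h.
rewrite -flow_step_glue // -(@flow_fix M (glue h1 h i)); first exact: mle_refl.
by rewrite in_fsetU yh orbT.
Qed.

(* The bound transfers from h1 to h2, because h2 induces less flow on h. *)
Lemma ctx_bounded_equiv h1 h2 h i : ctx_equiv h1 h2 -> [disjoint fg_X h1 & fg_X h] ->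
  ctx_bounded h1 h i -> ctx_bounded h2 h i.
Proof.
move=> eq12 disj bnd; have [eqX [eqin _]] := eq12.
move=> y x; rewrite -eqX => yX xX; rewrite -eqin //.
apply: mle_trans (bnd y x yX xX); rewrite /ctx_inflow; case: ifP => yh; last exact: mle_refl.
by apply: continuous_mono; [exact: fg_E_cont|exact: flow_glue_equiv_le].
Qed.

Section EquivalentComponents.
Variables (h1 h2 h : flow_graph M) (i : nat -> nat -> M).
Hypotheses (eq12 : ctx_equiv h1 h2) (disj : [disjoint fg_X h1 & fg_X h]).
Hypothesis bnd : ctx_bounded h1 h i.

Lemma flow_glue_equiv_ctx x : x \in fg_X h -> flow (glue h2 h i) x = flow (glue h1 h i) x.
Proof.
have [eqX _] := eq12.
have disj2 : [disjoint fg_X h2 & fg_X h] by rewrite -eqX.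
move=> xh; apply: fm_antisym; first exact: flow_glue_equiv_le.
exact: flow_glue_equiv_le (ctx_equiv_sym eq12) disj2 (ctx_bounded_equiv eq12 disj bnd) x xh.
Qed.

(* Hence h2 receives the same inflow from h in both unions. *)
Lemma flow_glue_equiv_comp x : x \in fg_X h1 ->
  flow (glue h2 h i) x = flow (restrict h2 h i (flow (glue h1 h i))) x.
Proof.
have [eqX _] := eq12.
have disj2 : [disjoint fg_X h2 & fg_X h] by rewrite -eqX.
move=> x1; rewrite eqX in x1; rewrite (flow_glue_restrict i disj2 x1).
congr (flow (with_inflow h2 _) x).
apply: functional_extensionality => y; apply: functional_extensionality => x'.
by rewrite /ctx_inflow; case: ifP => // yh; rewrite flow_glue_equiv_ctx.
Qed.

Lemma out_glue_equiv x y : x \in fg_X h1 `|` fg_X h -> y \notin fg_X h1 `|` fg_X h ->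
  out (glue h1 h i) x y = out (glue h2 h i) x y.
Proof.
have [eqX _] := eq12.
rewrite /out /= -eqX !in_fsetU negb_or => /orP [x1|xh] /andP [y1 _]; rewrite ?x1.
  by rewrite flow_glue_equiv_comp // tf_restrict.
have -> : (x \in fg_X h1) = false by apply/negP => /(fdisjointP disj); rewrite xh.
by rewrite flow_glue_equiv_ctx.
Qed.

End EquivalentComponents.

Lemma ctx_inflow_comp h1 h : comp_def h1 h -> forall y x, y \notin fg_X h1 -> x \in fg_X h1 ->
  ctx_inflow h (fg_in (union h1 h)) (flow (union h1 h)) y x = fg_in h1 y x.
Proof.
move=> [[disj [_ outh1]] flow1] y x y1 x1; rewrite /ctx_inflow /= x1.
case: ifP => // yh; rewrite flow1 ?in_fsetU ?yh ?orbT // (negbTE y1).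
exact: outh1.
Qed.

Lemma ctx_bounded_comp h1 h i : comp_def h1 h ->
  (forall y x, y \notin fg_X h1 `|` fg_X h -> x \in fg_X h1 `|` fg_X h ->
     i y x <=m fg_in (union h1 h) y x) ->
  ctx_bounded h1 h i.
Proof.
move=> c1 lei y x y1 x1; rewrite -(ctx_inflow_comp c1) //.
rewrite /ctx_inflow; case: ifP => yh.
  apply: continuous_mono; first exact: fg_E_cont.
  have := @flow_inflow_mono M (union h1 h) i (fg_in (union h1 h)) lei y.
  by rewrite with_own_inflow; apply; rewrite in_fsetU yh orbT.
by apply: lei; rewrite in_fsetU ?x1 // negb_or y1 yh.
Qed.

End ContextualEquivalence.

Section Congruence.
Variable M : flow_monoid.

Implicit Types h : flow_graph M.

(* Composability h1 ## h only depends on the outflow and inflow of h1. *)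
Lemma comp_pre_equiv h1 h2 h : ctx_equiv h1 h2 -> comp_pre h1 h -> comp_pre h2 h.
Proof.
move=> eq12 [disj [out1h outh1]]; have [eqX [eqin _]] := eq12.
split; first by rewrite -eqX.
split=> x y; rewrite -eqX => x1 yh; have y1 : y \notin fg_X h1.
- by apply/negP => /(fdisjointP disj); rewrite yh.
- by rewrite -(out_equiv eq12 x1 y1) out1h.
- by apply/negP => /(fdisjointP disj); rewrite yh.
by rewrite outh1 // eqin.
Qed.

(* h1 # h transfers to h2: in the union with h2, the flow on h is unchanged
   and h2 still receives exactly h2.in, so its flow is h2.flow. *)
Lemma comp_def_equiv h1 h2 h : ctx_equiv h1 h2 -> comp_def h1 h -> comp_def h2 h.
Proof.
move=> eq12 c1; have [eqX [eqin _]] := eq12; have [[disj _] flow1] := c1.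
split; first exact: comp_pre_equiv c1.1.
set i := fg_in (union h1 h).
have bnd : ctx_bounded h1 h i by apply: ctx_bounded_comp => // ? ? _ _; exact: mle_refl.
have glue1 : glue h1 h i = union h1 h by rewrite /glue with_own_inflow.
have glue2 x : x \in fg_X h2 `|` fg_X h -> flow (union h2 h) x = flow (glue h2 h i) x.
  move=> xU; symmetry; apply: (@flow_inflow_ext M (union h2 h)) xU => y x' /=.
  rewrite /i /= -eqX => yU x'U.
  by case: ifP => // x'1; rewrite eqin //; move: yU; rewrite in_fsetU negb_or => /andP [].
move=> x xU; rewrite glue2 //; case: ifP => x2.
  have x1 : x \in fg_X h1 by rewrite eqX.
  rewrite (flow_glue_equiv_comp eq12 disj bnd x1) glue1.
  apply: (@flow_inflow_ext M h2) x2 => y x' y2 x'2; rewrite -eqX in y2 x'2.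
  by rewrite -eqin // -(ctx_inflow_comp c1).
have xh : x \in fg_X h by move: xU; rewrite in_fsetU x2.
by rewrite (flow_glue_equiv_ctx eq12 disj bnd xh) glue1 flow1 /= ?eqX ?x2 // in_fsetU xh orbT.
Qed.

(* h1 * h ~ h2 * h: same nodes, same inflow, and for every smaller inflow the
   bound holds, so both unions have the same outflow. *)
Lemma comp_ctx_equiv h1 h2 h : ctx_equiv h1 h2 -> comp_def h1 h ->
  ctx_equiv (fg_comp h1 h) (fg_comp h2 h).
Proof.
move=> eq12 c1; have [eqX [eqin _]] := eq12; have [[disj _] _] := c1.
split; first by rewrite /= eqX.
split=> [y x /= yU xU|i' lei' x y xU yU].
  rewrite -eqX; case: ifP => // x1; apply: eqin => //.
  by move: yU; rewrite in_fsetU negb_or => /andP [].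
exact: out_glue_equiv eq12 disj (ctx_bounded_comp c1 lei') x y xU yU.
Qed.

End Congruence.

Theorem theorem1 (M : flow_monoid) (h1 h2 h : flow_graph M) :
  ctx_equiv h1 h2 ->
  (comp_def h1 h <-> comp_def h2 h) /\
  (comp_def h1 h -> ctx_equiv (fg_comp h1 h) (fg_comp h2 h)).
Proof.
move=> eq12; split; last exact: comp_ctx_equiv.
by split; apply: comp_def_equiv; [exact: eq12|exact: ctx_equiv_sym].
Qed.
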